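(* Let $f$ be a tolerance function with $0<f(K)<K$. For given $\mathbf x,\mathbf y$, let $p=\lim_{n\to\infty}P(\mathbf y\in L(\mathbf x))<1$. Then $P(\mathbf y\in I(\mathbf x,f))=0$ holds if $$\lim_{K\to\infty}\frac{f(K)\ln K}{K}<-\ln p.$$ Furthermore, if $p<0.5$, then $P(\mathbf y\in I(\mathbf x,f))=0$ holds as soon as $\lim_{K\to\infty}f(K)/K=0$. Finally, for any such $f$, $\lim_{n\to\infty}P(\mathbf y\in L(\mathbf x))=1$ implies $P(\mathbf y\in I(\mathbf x,f))=1$.
   Context: Setting: $n$ instances form the dataset $\mathcal D=\mathcal D_n$; a forest $\Theta_K$ of $K$ axis-aligned causal trees is built on $\mathcal D$, the trees independent given $\mathcal D$. $L_k(\mathbf x)$ is the leaf of tree $k$ containing $\mathbf x$, $I(\mathbf x,\theta_k)$ its box; $P(\mathbf y\in L(\mathbf x))=P(\mathbf y\in L_k(\mathbf x)\mid\mathcal D)$, same for every $k$, with the events independent across $k$. LILI with $K$ trees under tolerance function $f$: $I(\mathbf x,\Theta_K,f)=\bigcup_{s>K-f(K)}\bigcup_{1\le i_1<\cdots<i_s\le K}\bigcap_{k=1}^sI(\mathbf x,\theta_{i_k})$, i.e. $\mathbf y\in I(\mathbf x,\Theta_K,f)$ iff the number of $k$ with $\mathbf y\in L_k(\mathbf x)$ exceeds $K-f(K)$; $P(\mathbf y\in I(\mathbf x,f)):=\lim_{K\to\infty}\lim_{n\to\infty}P(\mathbf y\in I(\mathbf x,\Theta_K,f)\mid\mathcal D_n)$.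 *)

From HB Require Import structures.
From mathcomp Require Import all_boot all_order all_algebra.
From mathcomp Require Import all_classical all_reals all_analysis.
Set Implicit Arguments. Unset Strict Implicit. Unset Printing Implicit Defensive.
Import Order.TTheory GRing.Theory Num.Theory.
Import numFieldNormedType.Exports.
Local Open Scope classical_set_scope.
Local Open Scope ring_scope.

Definition mutually_independent_events d (T : measurableType d) (R : realType)
    (P : probability T R) (K : nat) (A : 'I_K -> set T) : Prop :=
  (forall k, measurable (A k)) /\
  forall J : {set 'I_K},
    P (\bigcap_(k in [set k | k \in J]) A k) = (\prod_(k in J) P (A k))%E.

(* Number of trees k < K whose leaf L_k(x) contains y (event A k). *)
Definition leaf_count (T : Type) (K : nat) (A : 'I_K -> set T) (w : T) : nat :=
  (\sum_(k < K) `[< A k w >])%N.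

(* The event  y \in I(x, Theta_K, f): the number of k with y \in L_k(x)
   exceeds K - f(K). *)
Definition lili_event (R : realType) (T : Type) (f : nat -> R) (K : nat)
    (A : 'I_K -> set T) : set T :=
  [set w | K%:R - f K < (leaf_count A w)%:R].

(* The number of trees whose leaf at x contains y is a sum of K independent
   Bernoulli(P(y in L(x))) variables, so the probability that it exceeds
   K - f(K) is a polynomial in P(y in L(x)), and letting n -> oo replaces
   P(y in L(x)) by p.  For p < 1, bounding the indicator of "fewer than f(K)
   misses" by 2^(f(K) - #misses) gives the Chernoff-type bound
   2^f(K) ((1 + p) / 2)^K, which tends to 0 as soon as f(K) = o(K).  The
   hypotheses of the first two claims both imply f(K) = o(K).  For p = 1 all K trees contain y,
   and K > K - f(K) since f(K) > 0. *)

From HB Require Import structures.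
From mathcomp Require Import all_boot all_order all_algebra.
From mathcomp Require Import all_classical all_reals all_analysis.
From mathcomp Require Import ring lra.
Set Implicit Arguments. Unset Strict Implicit. Unset Printing Implicit Defensive.
Import Order.TTheory GRing.Theory Num.Theory.
Import numFieldNormedType.Exports.
Local Open Scope classical_set_scope.
Local Open Scope ring_scope.

Definition bern (R : pzRingType) (x : R) (b : bool) : R := if b then x else 1 - x.

Definition bern_count_prob (R : pzRingType) (K : nat) (x : 'I_K -> R) (Q : pred nat) : R :=
  \sum_(w : {ffun 'I_K -> bool} | Q (\sum_(k < K) w k)%N) \prod_(k < K) bern (x k) (w k).

Section IndependentEvents.
Context d (T : measurableType d) (R : realType) (P : probability T R).
Context (K : nat) (A : 'I_K -> set T) (x : 'I_K -> R).
Hypothesis indepA : mutually_independent_events P A.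
Hypothesis PA : forall k, P (A k) = (x k)%:E.

Let mA : forall k, measurable (A k) := indepA.1.

Definition hit_miss (J N : {set 'I_K}) : set T :=
  \bigcap_(k in [set` J]) A k `&` \bigcap_(k in [set` N]) ~` A k.

Lemma measurable_hit_miss (J N : {set 'I_K}) : measurable (hit_miss J N).
Proof.
by apply: measurableI; apply: fin_bigcap_measurable => // k _; exact/measurableC.
Qed.

Lemma hit_missD1 (J N : {set 'I_K}) k : k \in N ->
  hit_miss J N = hit_miss J (N :\ k) `\` A k.
Proof.
move=> Nk; apply/seteqP; split => t /=.
- move=> [tJ tN]; split; last exact: tN.
  by split=> // i /=; rewrite in_setD1 => /andP[_ Ni]; exact: tN.
- move=> [[tJ tN] tk]; split=> // i /= Ni.
  have [->|ik] := eqVneq i k; first exact: tk.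
  by apply: tN; rewrite /= in_setD1 ik.
Qed.

Lemma hit_missI (J N : {set 'I_K}) k :
  hit_miss J N `&` A k = hit_miss (k |: J)%SET N.
Proof.
apply/seteqP; split => t /=.
- move=> [[tJ tN] tk]; split=> // i /=; rewrite in_setU1 => /orP[/eqP->|] //.
  exact: tJ.
- move=> [tJ tN]; split; last by apply: tJ; rewrite /= setU11.
  by split=> // i /= Ji; apply: tJ; rewrite /= in_setU1 Ji orbT.
Qed.

Lemma prob_hit_miss (J N : {set 'I_K}) : {in N, forall k, k \notin J} ->
  P (hit_miss J N) = (\prod_(k in J) x k * \prod_(k in N) (1 - x k))%:E.
Proof.
move: {2}#|N| (erefl #|N|) => n; elim: n J N => [|n IH] J N.
- move=> /eqP; rewrite cards_eq0 => /eqP-> _.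
  rewrite /hit_miss big_set0 mulr1.
  have -> : [set` finset.set0] = @set0 'I_K by apply/seteqP; split=> k //=; rewrite inE.
  by rewrite bigcap_set0 setIT indepA.2 (eq_bigr _ (fun k _ => PA k)) prodEFin.
- move=> cardN NJ; have /card_gt0P[k Nk] : (0 < #|N|)%N by rewrite cardN.
  have cardNk : #|N :\ k| = n by move: cardN; rewrite (cardsD1 k N) Nk => -[].
  have NkJ : {in N :\ k, forall i, i \notin J}.
    by move=> i; rewrite in_setD1 => /andP[_]; exact: NJ.
  have NkkJ : {in N :\ k, forall i, i \notin k |: J}.
    by move=> i; rewrite in_setD1 in_setU1 negb_or => /andP[-> /NJ].
  (* P(E \ A_k) = P(E) - P(E & A_k), and both events on the right avoid one event less. *)
  rewrite (hit_missD1 _ Nk) measureD //; last 2 first.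
  - exact: measurable_hit_miss.
  - by rewrite ltey_eq fin_num_measure //; exact: measurable_hit_miss.
  rewrite hit_missI /= IH // IH // -EFinB (big_setU1 _ (NJ k Nk)) (big_setD1 k Nk) /=.
  by congr EFin; ring.
Qed.

Definition hit_pattern (t : T) : {ffun 'I_K -> bool} := [ffun k => `[< A k t >]].

Lemma hit_pattern_preimage1 w :
  hit_pattern @^-1` [set w] = hit_miss [set k | w k] [set k | ~~ w k].
Proof.
apply/seteqP; split => t /=.
- move=> <-; split=> k /=; rewrite inE ffunE ?asboolE //.
  by move/asboolPn.
- move=> [tw tnw]; apply/ffunP => k; rewrite ffunE.
  case wk: (w k); first by apply/asboolP; apply: tw; rewrite /= inE wk.
  by apply/asboolPn; apply: tnw; rewrite /= inE wk.
Qed.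

Lemma prob_hit_pattern1 w : P (hit_pattern @^-1` [set w]) = (\prod_(k < K) bern (x k) (w k))%:E.
Proof.
rewrite hit_pattern_preimage1 prob_hit_miss; last first.
  by move=> k; rewrite !inE.
congr EFin; rewrite [RHS](bigID (fun k => w k)) /=.
by congr (_ * _); apply: eq_big => k; rewrite inE //; case: (w k).
Qed.

Lemma prob_hit_pattern (Q : pred {ffun 'I_K -> bool}) :
  P (hit_pattern @^-1` [set w | Q w]) = (\sum_(w | Q w) \prod_(k < K) bern (x k) (w k))%:E.
Proof.
have -> : hit_pattern @^-1` [set w | Q w] = \bigcup_(w in [set` Q]) hit_pattern @^-1` [set w].
  by apply/seteqP; split => t /=; [exists (hit_pattern t) | move=> [w Qw /= ->]].
rewrite measure_fin_bigcup //; last 2 first.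
- by move=> w v _ _ [t [/= <- <-]].
- by move=> w _; rewrite hit_pattern_preimage1; exact: measurable_hit_miss.
rewrite -sumEFin (bigfs _ (index_enum_uniq _)); last by move=> w _; rewrite mem_index_enum.
by apply: eq_fsbigr => w _ /=; rewrite prob_hit_pattern1.
Qed.

Lemma prob_leaf_count (Q : pred nat) :
  P [set t | Q (leaf_count A t)] = (bern_count_prob x Q)%:E.
Proof.
have count_hit_pattern t : (\sum_(k < K) hit_pattern t k)%N = leaf_count A t.
  by apply: eq_bigr => k _; rewrite ffunE.
rewrite -prob_hit_pattern; congr (P _); apply/seteqP; split => t /=; by rewrite count_hit_pattern.
Qed.

End IndependentEvents.

Section BernoulliCount.
Variable R : realType.

Lemma bern_count_prob_ge0 K (x : 'I_K -> R) Q :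
  (forall k, 0 <= x k <= 1) -> 0 <= bern_count_prob x Q.
Proof.
move=> x01; apply: sumr_ge0 => w _; apply: prodr_ge0 => k _.
by have /andP[x0 x1] := x01 k; rewrite /bern; case: (w k); rewrite ?subr_ge0.
Qed.

Lemma cvg_bern_count_prob (U : Type) (F : set_system U) (FF : Filter F) K
    (u : U -> 'I_K -> R) (x : 'I_K -> R) Q :
  (forall k, u n k @[n --> F] --> x k) ->
  bern_count_prob (u n) Q @[n --> F] --> bern_count_prob x Q.
Proof.
move=> ux; apply: cvg_big => [|w _]; first exact: add_continuous.
apply: cvg_big => [|k _]; first exact: mul_continuous.
by rewrite /bern; case: (w k) => //; apply: cvgB => //; exact: cvg_cst.
Qed.

Lemma bern_count_prob_chernoff K (x s m : R) (Q : pred nat) :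
  0 <= x <= 1 -> 1 <= s -> (forall c, (c <= K)%N -> Q c -> (K - c)%:R <= m) ->
  bern_count_prob (fun _ : 'I_K => x) Q <= expR (m * ln s) * (x + (1 - x) / s) ^+ K.
Proof.
move=> /andP[x0 x1] s1 Qm.
have s0 : 0 < s by apply: lt_le_trans s1.
pose b' (b : bool) := if b then x else (1 - x) / s.
have b'0 b : 0 <= b' b by case: b; rewrite /b' ?divr_ge0 ?subr_ge0 // ltW.
have bernE b : bern x b = s ^+ (~~ b) * b' b.
  by case: b; rewrite /bern /b' /= ?mul1r ?expr1 // mulrC divfK ?gt_eqF.
have cardE (w : {ffun 'I_K -> bool}) :
    ((\sum_(k < K) ~~ w k) + \sum_(k < K) w k = K)%N.
  by rewrite -big_split /= -[RHS]card_ord -sum1_card; apply: eq_bigr => k; case: (w k).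
rewrite /bern_count_prob.
apply: (@le_trans _ _ (\sum_(w : {ffun 'I_K -> bool}) expR (m * ln s) * \prod_(k < K) b' (w k))).
  rewrite [leRHS](bigID (fun w : {ffun 'I_K -> bool} => Q (\sum_(k < K) w k)%N)) /= -[leLHS]addr0.
  apply: lerD; last by apply: sumr_ge0 => w _; rewrite mulr_ge0 ?expR_ge0 ?prodr_ge0.
  apply: ler_sum => w Qw; under eq_bigr do rewrite bernE.
  rewrite big_split /= prodrXr ler_wpM2r ?prodr_ge0 //.
  have Kw := cardE w; set c := (\sum_(k < K) w k)%N in Qw Kw.
  have -> : (\sum_(k < K) ~~ w k)%N = (K - c)%N by rewrite -[X in (X - c)%N]Kw addnK.
  rewrite -[s in s ^+ _]lnK ?posrE // -expRM_natl ler_expR ler_wpM2r ?ln_ge0 //.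
  by apply: Qm; rewrite // -Kw leq_addl.
rewrite -mulr_sumr ler_wpM2l ?expR_ge0 //.
rewrite -(bigA_distr_bigA (fun (_ : 'I_K) b => b' b)) /= prodr_const card_ord.
by rewrite big_bool.
Qed.

Lemma bern_count_prob1 K (Q : pred nat) : Q K -> bern_count_prob (fun _ : 'I_K => 1 : R) Q = 1.
Proof.
move=> QK; pose wT : {ffun 'I_K -> bool} := [ffun => true].
have QwT : Q (\sum_(k < K) wT k)%N.
  by rewrite (eq_bigr (fun=> 1%N)) ?sum1_card ?card_ord // => k _; rewrite ffunE.
rewrite /bern_count_prob (bigD1 wT) //= [X in _ + X]big1 ?addr0.
  by apply: big1 => k _; rewrite ffunE.
move=> w /andP[_ wwT].
have [k /negPf wk] : exists k, ~~ w k.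
  apply/existsP; apply: contraR wwT => /existsPn wT1; apply/eqP/ffunP => k.
  by rewrite ffunE; apply/negbNE.
by rewrite (bigD1 k) //= /bern wk subrr mul0r.
Qed.

Lemma cvg_expR_mul_expr (a c : R) (g : nat -> R) : 0 < a < 1 ->
  g K / K%:R @[K --> \oo] --> 0 -> expR (g K * c) * a ^+ K @[K --> \oo] --> 0.
Proof.
move=> /andP[a_gt0 a_lt1] g0.
have lna_lt0 : ln a < 0 by apply: ln_lt0; rewrite a_gt0.
have b_lt1 : `|expR (ln a / 2)| < 1 by rewrite gtr0_norm ?expR_gt0 // expR_lt1; lra.
apply: (squeeze_cvgr _ (cvg_cst 0) (cvg_expr b_lt1)).
have gK_small : \forall K \near \oo, g K / K%:R * c < - ln a / 2.
  apply: (cvgr_lt 0); last by lra.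
  by rewrite -(mul0r c); apply: cvgM g0 (cvg_cst _).
near=> K.
rewrite mulr_ge0 ?expR_ge0 ?exprn_ge0 ?(ltW a_gt0) //=.
have gKlt : g K / K%:R * c < - ln a / 2 by near: K.
have K_gt0 : 0 < K%:R :> R by rewrite ltr0n; near: K; exact: nbhs_infty_gt.
rewrite -[a in a ^+ _]lnK ?posrE // -!expRM_natl -expRD ler_expR.
have -> : g K * c = g K / K%:R * c * K%:R by field; rewrite gt_eqF.
nra.
Unshelve. all: by end_near.
Qed.

Lemma bern_count_prob_tail_cvg0 (x : R) (g : nat -> R) : 0 <= x < 1 ->
  g K / K%:R @[K --> \oo] --> 0 ->
  bern_count_prob (fun _ : 'I_K => x) (fun c : nat => K%:R - g K < c%:R) @[K --> \oo] --> 0.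
Proof.
move=> /andP[x0 x1] g0.
have x01 : 0 <= x <= 1 by rewrite x0 ltW.
have a01 : 0 < (1 + x) / 2 < 1 by apply/andP; split; lra.
apply: (squeeze_cvgr _ (cvg_cst 0) (cvg_expR_mul_expr (ln 2) a01 g0)).
near=> K; rewrite bern_count_prob_ge0 //=.
have -> : (1 + x) / 2 = x + (1 - x) / 2 by field.
apply: bern_count_prob_chernoff => // [|c cK /=]; first by rewrite ler1n.
by rewrite natrB //; lra.
Unshelve. all: by end_near.
Qed.

End BernoulliCount.

Lemma cvg_invr_ln_nat (R : realType) : (ln (n%:R : R))^-1 @[n --> \oo] --> 0.
Proof.
apply/cvgrPdist_lt => e e0; near=> n.
have ltn : expR e^-1 < n%:R by near: n; exact: nbhs_infty_gtr.
have lt_ln : e^-1 < ln n%:R.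
  by rewrite -[e^-1]expRK ltr_ln ?posrE ?expR_gt0 //; exact: lt_trans (expR_gt0 _) ltn.
have ln_gt0 : 0 < ln (n%:R : R) by apply: lt_trans lt_ln; rewrite invr_gt0.
rewrite sub0r normrN ger0_norm ?invr_ge0 ?ltW //.
by rewrite -[ltRHS]invrK ltf_pV2 ?posrE ?invr_gt0.
Unshelve. all: by end_near.
Qed.

Lemma cvg0_of_cvg_mul_ln (R : realType) (u : nat -> R) (l : R) :
  u n * ln n%:R @[n --> \oo] --> l -> u n @[n --> \oo] --> 0.
Proof.
move=> ul; rewrite -(mulr0 l); apply: cvg_trans (cvgM ul (@cvg_invr_ln_nat R)).
apply: near_eq_cvg; near=> n.
have n_gt1 : (1 < n)%N by near: n; exact: nbhs_infty_gt.
by rewrite /= mulfK // gt_eqF // ln_gt0 // ltr1n.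
Unshelve. all: by end_near.
Qed.

Unset Implicit Arguments.

Theorem mainTheorem13
  (R : realType) (d : measure_display)
  (T : nat -> nat -> measurableType d)
  (P : forall n K : nat, probability (T n K) R)
  (A : forall n K : nat, 'I_K -> set (T n K))
  (pL : nat -> R) (p : R) (f : nat -> R) :
  (* tolerance function with 0 < f(K) < K *)
  (forall K : nat, (0 < K)%N -> 0 < f K < K%:R) ->
  (* given D_n, the K events {y in L_k(x)} are mutually independent *)
  (forall n K : nat, mutually_independent_events (P n K) (A n K)) ->
  (* each with the same probability P(y in L(x)) = pL n *)
  (forall (n K : nat) (k : 'I_K), P n K (A n K k) = (pL n)%:E) ->
  (* p = lim_n P(y in L(x)) *)
  pL @ \oo --> p ->
  [/\
   (* part 1 *)
   (p < 1 ->
    (exists l : R,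
       (fun K : nat => f K * ln K%:R / K%:R) @ \oo --> l /\
       (p = 0 \/ l < - ln p)) ->
    exists q : nat -> R,
      (forall K : nat,
         (fun n : nat => fine (P n K (lili_event f (A n K)))) @ \oo --> q K) /\
      q @ \oo --> (0 : R)),
   (* part 2 *)
   (p < 2^-1 ->
    (fun K : nat => f K / K%:R) @ \oo --> 0 ->
    exists q : nat -> R,
      (forall K : nat,
         (fun n : nat => fine (P n K (lili_event f (A n K)))) @ \oo --> q K) /\
      q @ \oo --> (0 : R))
   &
   (* part 3 *)
   (p = 1 ->
    exists q : nat -> R,
      (forall K : nat,
         (fun n : nat => fine (P n K (lili_event f (A n K)))) @ \oo --> q K) /\
      q @ \oo --> (1 : R))].
Proof.
move=> f_bounds indep PA pLp.
have pL_ge0 n : 0 <= pL n by rewrite -lee_fin -(PA n 1%N ord0) measure_ge0.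
have p0 : 0 <= p by apply: (ler_cvg_to (cvg_cst 0) pLp); exact: nearW.
pose q K := bern_count_prob (fun _ : 'I_K => p) (fun c : nat => K%:R - f K < c%:R).
have Pq K : (fun n => fine (P n K (lili_event f (A n K)))) @ \oo --> q K.
  have -> : (fun n => fine (P n K (lili_event f (A n K)))) =
      (fun n => bern_count_prob (fun _ : 'I_K => pL n) (fun c : nat => K%:R - f K < c%:R)).
    apply/funext => n; rewrite /lili_event.
    by rewrite (prob_leaf_count (indep n K) (PA n K) (fun c : nat => K%:R - f K < c%:R)).
  exact: cvg_bern_count_prob.
split.
- move=> p1 [l [fl _]]; exists q; split=> //.
  apply: bern_count_prob_tail_cvg0; first by rewrite p0.
  by apply: (@cvg0_of_cvg_mul_ln _ _ l); under eq_fun do rewrite mulrAC.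
- move=> p_half f0; exists q; split=> //.
  apply: bern_count_prob_tail_cvg0 f0; rewrite p0 /=; apply: lt_trans p_half _.
  by rewrite invf_lt1 // ltr1n.
- move=> p1; exists q; split=> //; apply: cvg_near_cst; near=> K.
  have K_gt0 : (0 < K)%N by near: K; exact: nbhs_infty_gt.
  rewrite /q p1 bern_count_prob1 //= ltrBlDr ltrDl.
  by case/andP: (f_bounds K K_gt0).
Unshelve. all: by end_near.
Qed.
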